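(* Let $\mathcal{C},\mathcal{D}$ be categories, $R$ a monad on $\mathcal{C}\times\mathcal{D}$ and $A\in\mathcal{D}$. Let $R_{A,1}$ be the monad on $\mathcal{C}$ with $R_{A,1}(X)=\mathrm{pr}_{\mathcal{C}}(R(X,A))$, unit $\mathrm{pr}_{\mathcal{C}}(\eta_{(X,A)})$ and $\mathrm{bind}'(f)=\mathrm{pr}_{\mathcal{C}}(\mathrm{bind}(f,\mathrm{pr}_{\mathcal{D}}(\eta_{(X',A)})))$ for $f:X\to R_{A,1}(X')$. Then the functor $M_{A,1}:\mathcal{C}\to\mathcal{C}\times\mathcal{D}$, $X\mapsto R(X,A)$, together with the morphisms $$\rho(f):=\mathrm{bind}(f,\mathrm{pr}_{\mathcal{D}}(\eta_{(X',A)})):R(X,A)\to R(X',A)\qquad(f:X\to R_{A,1}(X')),$$ is a left $R_{A,1}$-module with values in $\mathcal{C}\times\mathcal{D}$.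
   Context: Monads are given in Kleisli form: $R(X)$, $\eta_X:X\to R(X)$, and $\mathrm{bind}(f):R(X)\to R(Y)$ for $f:X\to R(Y)$, satisfying $\mathrm{bind}(\eta_X)=\mathrm{id}$, $\mathrm{bind}(f)\circ\eta_X=f$, $\mathrm{bind}(\mathrm{bind}(g)\circ f)=\mathrm{bind}(g)\circ\mathrm{bind}(f)$. For a monad $R'$ on $\mathcal{C}$, a left $R'$-module with values in $\mathcal{E}$ is a functor $LM:\mathcal{C}\to\mathcal{E}$ with morphisms $\rho(f):LM(X)\to LM(X')$ for every $f:X\to R'(X')$ such that $\rho(\eta'_X)=\mathrm{id}$ and $\rho(g)\circ\rho(f)=\rho(\mathrm{bind}'(g)\circ f)$. $(f,\mathrm{pr}_{\mathcal{D}}(\eta_{(X',A)}))$ denotes the morphism $(X,A)\to R(X',A)$ in $\mathcal{C}\times\mathcal{D}$ with these two components. *)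

Set Implicit Arguments.
Unset Strict Implicit.

Record Category := {
  ob :> Type;
  hom : ob -> ob -> Type;
  idm : forall a, hom a a;
  comp : forall a b c, hom b c -> hom a b -> hom a c;
  comp_id_l : forall a b (f : hom a b), comp (idm b) f = f;
  comp_id_r : forall a b (f : hom a b), comp f (idm a) = f;
  comp_assoc : forall a b c d (f : hom a b) (g : hom b c) (h : hom c d),
      comp h (comp g f) = comp (comp h g) f
}.
Arguments hom {C} : rename.
Arguments idm {C} : rename.
Arguments comp {C a b c} : rename.

Definition prod_cat (C D : Category) : Category.
Proof.
  refine {| ob := (ob C * ob D)%type;
            hom := fun x y => (hom (fst x) (fst y) * hom (snd x) (snd y))%type;
            idm := fun x => (idm (fst x), idm (snd x));
            comp := fun x y z g f => (comp (fst g) (fst f), comp (snd g) (snd f)) |}.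
  - intros [a1 a2] [b1 b2] [f1 f2]; simpl; rewrite !comp_id_l; reflexivity.
  - intros [a1 a2] [b1 b2] [f1 f2]; simpl; rewrite !comp_id_r; reflexivity.
  - intros a b c d [f1 f2] [g1 g2] [h1 h2]; simpl; rewrite !comp_assoc; reflexivity.
Defined.

Record Monad (C : Category) := {
  M :> ob C -> ob C;
  eta : forall X, hom X (M X);
  bind : forall X Y, hom X (M Y) -> hom (M X) (M Y);
  bind_eta : forall X, bind (eta X) = idm (M X);
  bind_comp_eta : forall X Y (f : hom X (M Y)), comp (bind f) (eta X) = f;
  bind_bind : forall X Y Z (f : hom X (M Y)) (g : hom Y (M Z)),
      bind (comp (bind g) f) = comp (bind g) (bind f)
}.
Arguments eta {C} m X : rename.
Arguments bind {C} m {X Y} : rename.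

(* The morphism part of the functor LM is the derived LM(h) := rho(eta' o h). *)
Definition is_left_module (C E : Category) (R' : Monad C) (LM : ob C -> ob E)
  (rho : forall X X', hom X (R' X') -> hom (LM X) (LM X')) : Prop :=
  (forall X, rho X X (eta R' X) = idm (LM X)) /\
  (forall X X' X'' (f : hom X (R' X')) (g : hom X' (R' X'')),
      comp (rho X' X'' g) (rho X X' f) = rho X X'' (comp (bind R' g) f)).

Arguments is_left_module {C E} R' LM rho.

Section RA1.
Variables (C D : Category) (R : Monad (prod_cat C D)) (A : ob D).

Definition RA1_obj (X : ob C) : ob C := fst (R (X, A)).
Definition RA1_eta (X : ob C) : hom X (RA1_obj X) := fst (eta R (X, A)).
Definition RA1_lift X X' (f : hom X (RA1_obj X'))
  : @hom (prod_cat C D) (X, A) (R (X', A)) := (f, snd (eta R (X', A))).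
Definition RA1_bind X X' (f : hom X (RA1_obj X'))
  : hom (RA1_obj X) (RA1_obj X') := fst (bind R (RA1_lift f)).

Lemma RA1_bind_eta X : RA1_bind (RA1_eta X) = idm (RA1_obj X).
Proof.
  unfold RA1_bind, RA1_lift, RA1_eta.
  rewrite <- surjective_pairing, bind_eta. reflexivity.
Qed.

Lemma RA1_bind_comp_eta X Y (f : hom X (RA1_obj Y)) :
  comp (RA1_bind f) (RA1_eta X) = f.
Proof.
  unfold RA1_bind, RA1_eta.
  change (fst (@comp (prod_cat C D) _ _ _ (bind R (RA1_lift f)) (eta R (X, A))) = f).
  rewrite bind_comp_eta. reflexivity.
Qed.

Lemma RA1_bind_bind X Y Z (f : hom X (RA1_obj Y)) (g : hom Y (RA1_obj Z)) :
  RA1_bind (comp (RA1_bind g) f) = comp (RA1_bind g) (RA1_bind f).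
Proof.
  assert (H : RA1_lift (comp (RA1_bind g) f)
              = @comp (prod_cat C D) _ _ _ (bind R (RA1_lift g)) (RA1_lift f)).
  { unfold RA1_lift, RA1_bind; simpl. f_equal.
    change (snd (eta R (Z, A)) =
            snd (@comp (prod_cat C D) _ _ _ (bind R (RA1_lift g)) (eta R (Y, A)))).
    rewrite bind_comp_eta. reflexivity. }
  unfold RA1_bind at 1. rewrite H, bind_bind. reflexivity.
Qed.

Definition RA1 : Monad C :=
  {| M := RA1_obj; eta := RA1_eta; bind := RA1_bind;
     bind_eta := RA1_bind_eta; bind_comp_eta := RA1_bind_comp_eta;
     bind_bind := RA1_bind_bind |}.

Definition MA1 (X : ob C) : ob (prod_cat C D) := R (X, A).
Definition MA1_rho X X' (f : hom X (RA1 X')) : hom (MA1 X) (MA1 X') :=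
  bind R (RA1_lift f).
End RA1.
Arguments MA1_rho {C D} R A X X' f.
Arguments MA1 {C D} R A X.
Arguments RA1 {C D} R A.


(* Both module laws are the monad laws of R, transported along the lift
   f |-> (f, pr_D(eta_(X',A))): the lift of the unit of R_{A,1} is the unit
   of R, and the lift of a Kleisli composite in R_{A,1} is the Kleisli
   composite in R of the lifts. *)

Section LiftRA1.
Variables (C D : Category) (R : Monad (prod_cat C D)) (A : ob D).

Lemma RA1_lift_eta (X : ob C) :
  RA1_lift (RA1_eta R A X) = eta R (X, A).
Proof.
  unfold RA1_lift, RA1_eta. symmetry. apply surjective_pairing.
Qed.

(* The C-components agree by definition of [RA1_bind]; the D-components by the
   D-part of the monad law [bind g o eta = g]. *)
Lemma RA1_lift_comp (X X' X'' : ob C)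
  (f : hom X (RA1_obj R A X')) (g : hom X' (RA1_obj R A X'')) :
  RA1_lift (comp (RA1_bind g) f)
  = @comp (prod_cat C D) _ _ _ (bind R (RA1_lift g)) (RA1_lift f).
Proof.
  unfold RA1_lift at 1 3, RA1_bind; simpl. f_equal.
  change (snd (eta R (X'', A)) =
          snd (@comp (prod_cat C D) _ _ _ (bind R (RA1_lift g)) (eta R (X', A)))).
  rewrite bind_comp_eta. reflexivity.
Qed.

End LiftRA1.

Theorem lemma2p5 (C D : Category) (R : Monad (prod_cat C D)) (A : ob D) :
  is_left_module (RA1 R A) (MA1 R A) (MA1_rho R A).
Proof.
  split.
  - intros X. unfold MA1_rho.
    transitivity (bind R (eta R (X, A))).
    + f_equal. apply RA1_lift_eta.
    + apply bind_eta.
  - intros X X' X'' f g. unfold MA1_rho.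
    transitivity (bind R (@comp (prod_cat C D) _ _ _
                    (bind R (RA1_lift g)) (RA1_lift f))).
    + symmetry. apply bind_bind.
    + f_equal. symmetry. apply RA1_lift_comp.
Qed.
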